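(* Let $H=(T_1,\dots,T_n,p_1,\dots,p_n)$ be a strategic game with a belief structure satisfying properties A and B. Then: (i) $\overline{GR}^{\alpha}=\overline{LR}^{\alpha}$ for all ordinals $\alpha$; in particular the outcomes of $\overline{GR}$ and $\overline{LR}$ coincide. (ii) The operator $\overline{LR}$ is order independent; indeed, the outcome of every relaxation of $\overline{LR}$ that has an outcome equals the outcome of $\overline{GR}$. (iii) $LR^{\alpha}=\overline{LR}^{\alpha}$ for all ordinals $\alpha$; in particular the outcome of $LR$ exists and equals the outcome of $\overline{LR}$.
   Context: A strategic game $H=(T_1,\dots,T_n,p_1,\dots,p_n)$ has nonempty strategy sets $T_i$ and real payoffs. A restriction is $G=(S_1,\dots,S_n)$ with $S_i\subseteq T_i$ (possibly empty), ordered by componentwise inclusion (a complete lattice with top $H$). A belief structure gives each player $i$ a nonempty belief set $\mathcal B_i$, an expected payoff $p_i:T_i\times\mathcal B_i\to\mathbb R$, and for each restriction $G$ a set $\mathcal B_i\,\dot\cap\,G\subseteq\mathcal B_i$, with $\mathcal B_i\,\dot\cap\,H=\mathcal B_i$. Property A: $G_1\subseteq G_2\subseteq H$ implies $\mathcal B_i\,\dot\cap\,G_1\subseteq\mathcal B_i\,\dot\cap\,G_2$ for all $i$. Best response: for $G=(S_1,\dots,S_n)$, $s_i\in T_i$ is in $BR_G(\mu_i)$ iff $p_i(s_i,\mu_i)\ge p_i(s_i',\mu_i)$ for all $s_i'\in S_i$. Property B: for every $i$ and every $\mu_i\in\mathcal B_i$, $BR_H(\mu_i)\neq\emptyset$.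 Operators: $GR(G):=(S_1',\dots,S_n')$ with $S_i':=\{s_i\in T_i\mid\exists\mu_i\in\mathcal B_i\,\dot\cap\,G:\ s_i\in BR_H(\mu_i)\}$; $LR(G):=(S_1',\dots,S_n')$ with $S_i':=\{s_i\in T_i\mid\exists\mu_i\in\mathcal B_i\,\dot\cap\,G:\ s_i\in BR_G(\mu_i)\}$; $\overline{T}(G):=T(G)\cap G$. Iterations: $T^0:=H$, $T^{\alpha+1}:=T(T^\alpha)$, $T^\beta:=\bigcap_{\alpha<\beta}T^\alpha$ for limit $\beta$; closure ordinal $\alpha_T$ = least $\alpha$ with $T^{\alpha+1}=T^\alpha$, outcome $T^{\alpha_T}$. $R$ is a relaxation of $T$ if for all ordinals $\alpha$: (1) $T(R^\alpha)\subseteq R(R^\alpha)$; (2) if $T(R^\alpha)\subseteq R^\alpha$ then $R(R^\alpha)\subseteq R^\alpha$; (3) if $R(R^\alpha)=R^\alpha$ then $T(R^\alpha)=R^\alpha$. $T$ is order independent if the set of outcomes of relaxations of $T$ has at most one element. *)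

From Stdlib Require Import Reals.
From mathcomp Require Import ssreflect ssrfun ssrbool eqtype ssrnat fintype.

Set Implicit Arguments.
Unset Strict Implicit.

Record game (n : nat) := Game {
  strat : 'I_n -> Type;
  strat_ne : forall i, inhabited (strat i);
  payoff : 'I_n -> (forall j, strat j) -> R
}.

Definition restriction n (H : game n) := forall i : 'I_n, strat H i -> Prop.

Definition rtop n (H : game n) : restriction H := fun _ _ => True.

Arguments rtop {n} H _ _.

Definition rsub n (H : game n) (G1 G2 : restriction H) : Prop :=
  forall i s, G1 i s -> G2 i s.

Definition rcap n (H : game n) (G1 G2 : restriction H) : restriction H :=
  fun i s => G1 i s /\ G2 i s.

Record belief_structure n (H : game n) := BeliefStructure {
  belief : 'I_n -> Type;
  belief_ne : forall i, inhabited (belief i);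
  exp_payoff : forall i, strat H i -> belief i -> R;
  bcap : forall i, restriction H -> belief i -> Prop;
  bcap_top : forall i (mu : belief i), bcap (rtop H) mu
}.

Arguments belief {n H} b i.
Arguments exp_payoff {n H} b {i} s mu.
Arguments bcap {n H} b {i} G mu.

Definition propertyA n (H : game n) (bs : belief_structure H) : Prop :=
  forall G1 G2 : restriction H, rsub G1 G2 ->
    forall i (mu : belief bs i), bcap bs G1 mu -> bcap bs G2 mu.

Definition BR n (H : game n) (bs : belief_structure H) (G : restriction H)
    (i : 'I_n) (mu : belief bs i) (s : strat H i) : Prop :=
  forall s' : strat H i, G i s' -> (exp_payoff bs s' mu <= exp_payoff bs s mu)%R.

Definition propertyB n (H : game n) (bs : belief_structure H) : Prop :=
  forall i (mu : belief bs i), exists s : strat H i, BR (rtop H) mu s.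

Definition operator n (H : game n) := restriction H -> restriction H.

Definition GR n (H : game n) (bs : belief_structure H) : operator H :=
  fun G i s => exists mu : belief bs i, bcap bs G mu /\ BR (rtop H) mu s.

Definition LR n (H : game n) (bs : belief_structure H) : operator H :=
  fun G i s => exists mu : belief bs i, bcap bs G mu /\ BR G mu s.

Definition obar n (H : game n) (T : operator H) : operator H :=
  fun G => rcap (T G) G.

(** * Ordinals, rendered as elements of well-ordered types.
    Every ordinal alpha is an element of some well-order (e.g. alpha+1), and
    every element of a well-order corresponds to an ordinal (its order type). *)

Record wellorder := WellOrder {
  wo_carrier :> Type;
  wo_lt : wo_carrier -> wo_carrier -> Prop;
  wo_wf : well_founded wo_lt;
  wo_trans : forall x y z, wo_lt x y -> wo_lt y z -> wo_lt x z;
  wo_total : forall x y, wo_lt x y \/ x = y \/ wo_lt y x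
}.

Definition wo_succ (W : wellorder) (v w : W) : Prop :=
  wo_lt v w /\ ~ (exists u, wo_lt v u /\ wo_lt u w).

(** f : W -> restrictions is the transfinite iteration of T along W:
    T^0 = H, T^(a+1) = T(T^a), T^b = intersection of T^a (a<b) for limit b.
    (The zero case is the empty intersection, i.e. H.) *)
Definition is_iteration n (H : game n) (T : operator H) (W : wellorder)
    (f : W -> restriction H) : Prop :=
  forall w : W,
    (forall v, wo_succ v w -> f w = T (f v)) /\
    (~ (exists v, wo_succ v w) ->
       f w = (fun i s => forall v, wo_lt v w -> f v i s)).

(** X is the outcome of T: X = T^{alpha_T}, where alpha_T is the least
    ordinal alpha with T^(alpha+1) = T^alpha. *)
Definition outcome n (H : game n) (T : operator H) (X : restriction H) : Prop :=
  exists (W : wellorder) (f : W -> restriction H) (a a1 : W),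
    is_iteration T f /\ wo_succ a a1 /\ f a1 = f a /\ X = f a /\
    (forall b b1 : W, wo_lt b a -> wo_succ b b1 -> f b1 <> f b).

Definition relaxation n (H : game n) (T R : operator H) : Prop :=
  forall (W : wellorder) (f : W -> restriction H), is_iteration R f ->
    forall w : W,
      rsub (T (f w)) (R (f w)) /\
      (rsub (T (f w)) (f w) -> rsub (R (f w)) (f w)) /\
      (R (f w) = f w -> T (f w) = f w).

Definition order_independent n (H : game n) (T : operator H) : Prop :=
  forall (R1 R2 : operator H) (X1 X2 : restriction H),
    relaxation T R1 -> relaxation T R2 ->
    outcome R1 X1 -> outcome R2 X2 -> X1 = X2.

From Stdlib Require Import Reals Classical FunctionalExtensionality PropExtensionality ProofIrrelevance.
From mathcomp Require Import ssreflect ssrfun ssrbool eqtype ssrnat fintype.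

(* Call a restriction G GR-closed when GR G is contained in G.  On GR-closed
   restrictions property B gives LR G = GR G, so LR, obar LR and obar GR all act
   alike there; property A makes obar GR and arbitrary intersections preserve
   GR-closedness, so every stage of the three iterations is GR-closed and the
   iterations coincide.  The stages of a relaxation of obar LR likewise stay
   GR-closed and, by conditions (1) and (2), above the greatest fixpoint of the
   monotone operator obar GR; condition (3) makes the final stage a fixpoint of
   obar GR, hence equal to that greatest fixpoint.  Outcomes exist because a
   deflationary operator can be iterated along its tower, the least family of
   restrictions closed under the operator and under arbitrary intersections,
   which is a chain well-ordered by reverse inclusion (Bourbaki-Witt). *)

Set Implicit Arguments.
Unset Strict Implicit.

Lemma forall_or_counterexample (A : Type) (P Q : A -> Prop) :
  (forall a, P a -> Q a) \/ exists2 a, P a & ~ Q a.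
Proof.
case: (classic (exists2 a, P a & ~ Q a)) => [? | hn]; [by right | left=> a Pa].
by apply: NNPP => nQ; apply: hn; exists a.
Qed.

Section Restrictions.
Variables (n : nat) (H : game n).

Lemma restriction_ext (G1 G2 : restriction H) : rsub G1 G2 -> rsub G2 G1 -> G1 = G2.
Proof.
move=> h12 h21; apply: functional_extensionality_dep => i.
apply: functional_extensionality => s.
by apply: propositional_extensionality; split; [apply: h12 | apply: h21].
Qed.

Lemma rsub_refl (G : restriction H) : rsub G G.
Proof. by []. Qed.

Lemma rsub_trans (G1 G2 G3 : restriction H) : rsub G1 G2 -> rsub G2 G3 -> rsub G1 G3.
Proof. by move=> h12 h23 i s /h12 /h23. Qed.

Definition rproper (G1 G2 : restriction H) : Prop := rsub G1 G2 /\ G1 <> G2.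

Definition rmeet (S : restriction H -> Prop) : restriction H :=
  fun i s => forall K, S K -> K i s.

Lemma rmeet_lb (S : restriction H -> Prop) K : S K -> rsub (rmeet S) K.
Proof. by move=> SK i s /(_ K SK). Qed.

Definition deflationary (T : operator H) : Prop := forall G, rsub (T G) G.

Definition monotone (T : operator H) : Prop :=
  forall G1 G2, rsub G1 G2 -> rsub (T G1) (T G2).

Lemma obar_deflationary (T : operator H) : deflationary (obar T).
Proof. by move=> G i s []. Qed.

End Restrictions.

Section BestResponses.
Variables (n : nat) (H : game n) (bs : belief_structure H).
Hypothesis hA : propertyA bs.
Hypothesis hB : propertyB bs.

Definition GR_closed (G : restriction H) : Prop := rsub (GR bs G) G.

Definition agrees_on_GR_closed (T : operator H) : Prop :=
  forall G, GR_closed G -> T G = obar (GR bs) G.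

Lemma BR_rtop G i (mu : belief bs i) s : BR (rtop H) mu s -> BR G mu s.
Proof. by move=> hbr s' _; apply: hbr. Qed.

Lemma GR_mono : monotone (GR bs).
Proof. by move=> G1 G2 h12 i s [mu [/(hA h12) hmu hbr]]; exists mu. Qed.

Lemma obar_GR_mono : monotone (obar (GR bs)).
Proof. by move=> G1 G2 h12 i s [/(GR_mono h12) hGR /h12]. Qed.

Lemma GR_closed_obar_GR G : GR_closed G -> GR_closed (obar (GR bs) G).
Proof.
move=> hG i s [mu [hmu hbr]].
have hmuG := hA (@obar_deflationary _ _ (GR bs) G) hmu.
by split; [exists mu | apply: hG; exists mu].
Qed.

Lemma GR_closed_meet (I : Type) (P : I -> Prop) (F : I -> restriction H) :
  (forall k, P k -> GR_closed (F k)) -> GR_closed (fun i s => forall k, P k -> F k i s).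
Proof.
move=> hF i s [mu [hmu hbr]] k Pk; apply: (hF k Pk); exists mu; split=> //.
by apply: hA hmu => j t; apply.
Qed.

(* Property B supplies a best response t to mu in the whole game, and t lies in
   G because G is GR-closed; comparing with t upgrades BR G to BR (rtop H). *)
Lemma LR_GR_closed G : GR_closed G -> LR bs G = GR bs G.
Proof.
move=> hG; apply: restriction_ext => i s [mu [hmu hbr]]; exists mu; split=> //.
- have [t ht] := hB mu.
  have tG : G i t by apply: hG; exists mu.
  by move=> s' _; apply: Rle_trans (ht s' I) (hbr t tG).
- exact: BR_rtop.
Qed.

Lemma obar_GR_agrees : agrees_on_GR_closed (obar (GR bs)).
Proof. by []. Qed.

Lemma obar_LR_agrees : agrees_on_GR_closed (obar (LR bs)).
Proof. by move=> G hG; rewrite /obar LR_GR_closed. Qed.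

Lemma LR_agrees : agrees_on_GR_closed (LR bs).
Proof.
move=> G hG; rewrite LR_GR_closed //.
by apply: restriction_ext => i s; [move=> hs; split=> //; apply: hG | case].
Qed.

End BestResponses.

Section Iterations.
Variables (n : nat) (H : game n) (W : wellorder).

Definition limit_stage (f : W -> restriction H) (w : W) : restriction H :=
  fun i s => forall v, wo_lt v w -> f v i s.

Lemma iteration_ind (T : operator H) (f : W -> restriction H) (P : W -> Prop) :
  is_iteration T f ->
  (forall w v, wo_succ v w -> f w = T (f v) -> (forall u, wo_lt u w -> P u) -> P w) ->
  (forall w, f w = limit_stage f w -> (forall u, wo_lt u w -> P u) -> P w) ->
  forall w, P w.
Proof.
move=> hf hsucc hlim w; elim/(well_founded_induction (@wo_wf W)): w => w IH.
have [fsucc flim] := hf w.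
have [[v hv] | nv] := classic (exists v, wo_succ v w).
- exact: hsucc (fsucc v hv) IH.
- exact: hlim (flim nv) IH.
Qed.

Lemma iteration_unique (T : operator H) (f g : W -> restriction H) :
  is_iteration T f -> is_iteration T g -> forall w, f w = g w.
Proof.
move=> hf hg w; elim/(well_founded_induction (@wo_wf W)): w => w IH.
have [fsucc flim] := hf w; have [gsucc glim] := hg w.
have [[v hv] | nv] := classic (exists v, wo_succ v w).
- by rewrite (fsucc v hv) (gsucc v hv) (IH v hv.1).
- rewrite (flim nv) (glim nv).
  by apply: restriction_ext => i s hs v hv; [rewrite -IH | rewrite IH]; auto.
Qed.

Variable (bs : belief_structure H).
Hypothesis hA : propertyA bs.

Lemma iteration_GR_closed (T : operator H) (f : W -> restriction H) :
  agrees_on_GR_closed bs T -> is_iteration T f -> forall w, GR_closed bs (f w).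
Proof.
move=> hT hf; apply: (iteration_ind hf) => [w v hv -> IH | w -> IH].
- by rewrite hT; [apply: (GR_closed_obar_GR hA) |]; apply: IH hv.1.
- exact: (GR_closed_meet hA IH).
Qed.

Lemma iteration_transfer (T T' : operator H) (f : W -> restriction H) :
  agrees_on_GR_closed bs T -> agrees_on_GR_closed bs T' ->
  is_iteration T f -> is_iteration T' f.
Proof.
move=> hT hT' hf w; have [fsucc flim] := hf w; split=> // v hv.
have hv_closed := iteration_GR_closed hT hf (w:=v).
by rewrite (fsucc v hv) hT // hT'.
Qed.

End Iterations.

Lemma outcome_transfer n (H : game n) (bs : belief_structure H) (hA : propertyA bs)
    (T T' : operator H) X :
  agrees_on_GR_closed bs T -> agrees_on_GR_closed bs T' -> outcome T X -> outcome T' X.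
Proof.
move=> hT hT' [W [f [a [a1 [hf rest]]]]].
by exists W, f, a, a1; split; [exact: (iteration_transfer hA hT hT' hf) |].
Qed.

Section Tower.
Variables (n : nat) (H : game n) (T : operator H).

Inductive tower : restriction H -> Prop :=
| tower_T K : tower K -> tower (T K)
| tower_meet S : (forall K, S K -> tower K) -> tower (rmeet S).

Definition tower_bottom : restriction H := rmeet tower.

Lemma tower_bottom_tower : tower tower_bottom.
Proof. exact: tower_meet. Qed.

Lemma tower_bottom_least K : tower K -> rsub tower_bottom K.
Proof. exact: rmeet_lb. Qed.

Lemma post_fixpoint_sub_tower_bottom G :
  monotone T -> rsub G (T G) -> rsub G tower_bottom.
Proof.
move=> hmono hG i s Gs K hK; elim: hK i s Gs => [K' _ IH | S _ IH] i s Gs.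
- exact: hmono _ _ IH i s (hG i s Gs).
- by move=> K' SK'; apply: IH.
Qed.

Hypothesis hd : deflationary T.

Definition extreme (c : restriction H) : Prop :=
  forall x, tower x -> rsub c x -> x <> c -> rsub c (T x).

Lemma extreme_split c : extreme c -> forall x, tower x -> rsub c x \/ rsub x (T c).
Proof.
move=> hc x; elim=> [x' hx' [hcx | hxT] | S hS IH].
- have [-> | ne] := classic (x' = c); first by right.
  by left; apply: hc.
- by right; apply: rsub_trans (@hd x') hxT.
- case: (forall_or_counterexample S (rsub c)) => [hall | [K SK ncK]].
  + by left=> i s cs K SK; apply: hall.
  + by case: (IH K SK) => // hKT; right=> i s hs; apply: hKT; apply: hs.
Qed.

Lemma tower_extreme c : tower c -> extreme c.
Proof.
elim=> [c' hc' IH | S hS IH] x hx hsub hne.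
- case: (extreme_split IH hx) => [hcx | hxT]; last by case: hne; apply: restriction_ext.
  have [-> | ne] := classic (x = c'); first exact: rsub_refl.
  exact: rsub_trans (@hd c') (IH x hx hcx ne).
- case: (forall_or_counterexample S (fun K => rsub x (T K))) => [hall | [K SK nxK]].
  + by case: hne; apply: restriction_ext => // i s xs K SK; apply: hd (hall K SK i s xs).
  + case: (extreme_split (IH K SK) hx) => [hKx | //].
    have [exK | nxK'] := classic (x = K); last first.
      exact: rsub_trans (rmeet_lb SK) (IH K SK x hx hKx nxK').
    rewrite exK in hsub hne *.
    case: (extreme_split (IH K SK) (tower_meet hS)) => [hKm | //].
    by case: hne; apply: restriction_ext.
Qed.

Lemma tower_chain x y : tower x -> tower y -> rsub x y \/ rsub y x.
Proof.
move=> hx hy; case: (extreme_split (tower_extreme hy) hx) => [hyx | hxT]; first by right.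
by left; apply: rsub_trans hxT (@hd y).
Qed.

Lemma tower_below_fixpoint M :
  tower M -> T M = M -> forall K, tower K -> rsub K M -> K = M.
Proof.
move=> hM eM K; elim=> [K' hK' IH | S hS IH] hsub.
- case: (extreme_split (tower_extreme hK') hM) => [hKM | hMT].
  + by rewrite (IH hKM) eM.
  + exact: restriction_ext.
- apply: restriction_ext hsub _ => i s Ms Z SZ.
  case: (tower_chain (hS Z SZ) hM) => [hZM | hMZ]; last exact: hMZ.
  by rewrite (IH Z SZ hZM).
Qed.

Lemma tower_bottom_fixed : T tower_bottom = tower_bottom.
Proof.
apply: restriction_ext (@hd _) _; apply: tower_bottom_least.
exact: tower_T tower_bottom_tower.
Qed.

Lemma tower_cover x y : tower x -> tower y -> rproper x y ->
  ~ (exists z, tower z /\ rproper x z /\ rproper z y) -> x = T y.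
Proof.
move=> hx hy [hxy nxy] hgap.
case: (extreme_split (tower_extreme hy) hx) => [hyx | hxT].
  by case: nxy; apply: restriction_ext.
have [// | nxT] := classic (x = T y).
have [eT | nT] := classic (T y = y).
  by case: nxy; apply: tower_below_fixpoint.
case: hgap; exists (T y); split; first exact: tower_T.
by split; split=> //; apply: hd.
Qed.

Lemma tower_minimal y : tower y -> ~ (exists z, tower z /\ rproper z y) -> y = tower_bottom.
Proof.
move=> hy hmin; have [// | ne] := classic (y = tower_bottom).
case: hmin; exists tower_bottom; split; first exact: tower_bottom_tower.
by split; [exact: tower_bottom_least | move=> e; apply: ne].
Qed.

Lemma tower_limit x : tower x ->
  ~ (exists y, tower y /\ rproper x y /\
       ~ (exists z, tower z /\ rproper x z /\ rproper z y)) ->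
  x = rmeet (fun z => tower z /\ rproper x z).
Proof.
move=> hx hnopred; set L := rmeet _.
have hL : tower L by apply: tower_meet => K [].
have hxL : rsub x L by move=> i s xs K [_ [hxK _]]; apply: hxK.
have [// | nxL] := classic (x = L).
case: (extreme_split (tower_extreme hL) hx) => [hLx | hxT].
  exact: restriction_ext.
have [eT | nT] := classic (T L = x).
- case: hnopred; exists L; split=> //; split; first by split.
  move=> [z [hz [[hxz nxz] [hzL nzL]]]]; apply: nzL; apply: restriction_ext hzL _.
  by apply: rmeet_lb; split=> //; split.
- have hTL : T L = L.
    apply: restriction_ext (@hd L) _; apply: rmeet_lb; split; first exact: tower_T.
    by split=> // e; apply: nT; rewrite e.
  exact: tower_below_fixpoint hL hTL x hx hxL.
Qed.

(* Stages of the iteration are the tower elements, ordered by reverse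
   inclusion; a top index [None] is added so that the final stage has a
   successor, as [outcome] demands. *)
Definition tower_index : Type := option {K : restriction H | tower K}.

Definition tower_stage (w : tower_index) : restriction H :=
  if w is Some K then sval K else tower_bottom.

Definition tower_lt (v w : tower_index) : Prop :=
  match v, w with
  | Some K, Some K' => rproper (sval K') (sval K)
  | Some _, None => True
  | None, _ => False
  end.

Lemma tower_lt_wf : well_founded tower_lt.
Proof.
have accS K : tower K -> forall p : tower K, Acc tower_lt (Some (exist _ K p)).
  elim=> [K' hK' IH | S hS IH] p; constructor=> -[[z hz] [hKz nKz] | []].
  - case: (extreme_split (tower_extreme hK') hz) => [hK'z | hzT].
      have [ezK | nzK] := classic (z = K'); first by subst z; apply: IH.
      by apply: (Acc_inv (IH hK')) => /=; split=> // e; apply: nzK; rewrite e.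
    by case: nKz; apply: restriction_ext.
  - case: (forall_or_counterexample S (rsub z)) => [hall | [Z SZ nzZ]].
      by case: nKz; apply: restriction_ext => // i s zs Z SZ; apply: hall.
    case: (tower_chain (hS Z SZ) hz) => [hZz | //].
    apply: (Acc_inv (IH Z SZ (hS Z SZ))) => /=; split=> // e.
    by apply: nzZ; rewrite -e; apply: rsub_refl.
move=> -[[K p]|]; first exact: accS.
by constructor=> -[[z hz] _ | []]; apply: accS.
Qed.

Lemma tower_lt_trans u v w : tower_lt u v -> tower_lt v w -> tower_lt u w.
Proof.
case: u v w => [u|] [v|] [w|] //= [huv nuv] [hvw nvw].
split; first exact: rsub_trans hvw huv.
by move=> e; apply: nvw; apply: restriction_ext => //; rewrite e.
Qed.

Lemma tower_lt_total v w : tower_lt v w \/ v = w \/ tower_lt w v.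
Proof.
case: v w => [[v hv]|] [[w hw]|] /=; auto.
have [e | ne] := classic (v = w).
  by right; left; rewrite (subset_eq_compat _ _ _ _ hv hw e).
case: (tower_chain hv hw) => hvw; [right; right | left]; split=> //.
by move=> e; apply: ne.
Qed.

Definition tower_wellorder : wellorder :=
  WellOrder tower_lt_wf tower_lt_trans tower_lt_total.

Lemma tower_stage_antitone (v w : tower_wellorder) :
  wo_lt v w -> rsub (tower_stage w) (tower_stage v).
Proof.
case: v w => [[v hv]|] [[w hw]|] //= => [[] // | _].
exact: tower_bottom_least.
Qed.

Lemma tower_stage_iteration : is_iteration T (W:=tower_wellorder) tower_stage.
Proof.
move=> w; split.
- move=> [[y hy]|] [/= hvw hgap] //.
  case: w hvw hgap => [[x hx]|] /= hvw hgap.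
    apply: tower_cover => // -[z [hz [hxz hzy]]].
    by apply: hgap; exists (Some (exist _ z hz)).
  have -> : y = tower_bottom.
    apply: tower_minimal => // -[z [hz hzy]].
    by apply: hgap; exists (Some (exist _ z hz)).
  by rewrite tower_bottom_fixed.
- move=> nopred; apply: restriction_ext => i s hs.
    by move=> v /tower_stage_antitone; apply.
  case: w nopred hs => [[x hx]|] /= nopred hs.
    2: by move=> K hK; apply: (hs (Some (exist _ K hK))).
  have -> : x = rmeet (fun z => tower z /\ rproper x z).
    apply: tower_limit => // -[y [hy [hxy hgap]]].
    apply: nopred; exists (Some (exist _ y hy)); split=> //= -[[[z hz]|] [hyz hzx]] //.
    by apply: hgap; exists z.
  by move=> z [hz hxz]; apply: (hs (Some (exist _ z hz))).
Qed.

Lemma tower_outcome : outcome T tower_bottom.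
Proof.
pose a : tower_wellorder := Some (exist _ tower_bottom tower_bottom_tower).
exists tower_wellorder, tower_stage, a, None; split; first exact: tower_stage_iteration.
split.
  split=> // -[[[z hz] [[hzb nzb] _] | [_ []]]].
  by apply: nzb; apply: restriction_ext hzb _; apply: tower_bottom_least.
do 2 (split; first by []).
move=> b b1; case: b => [[y hy] [hby nby] | []] hsucc.
rewrite ((tower_stage_iteration b1).1 _ hsucc) /= => eT.
exact: nby (tower_below_fixpoint hy eT tower_bottom_tower hby).
Qed.

End Tower.

Section Relaxations.
Variables (n : nat) (H : game n) (bs : belief_structure H).
Hypothesis hA : propertyA bs.
Hypothesis hB : propertyB bs.
Variable R0 : operator H.
Hypothesis hR : relaxation (obar (LR bs)) R0.
Variables (W : wellorder) (f : W -> restriction H).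
Hypothesis hf : is_iteration R0 f.

Lemma relaxation_stage_GR_closed : forall w, GR_closed bs (f w).
Proof.
apply: (iteration_ind hf) => [w v hv -> IH | w -> IH]; last first.
  exact: (GR_closed_meet hA IH).
have hv_closed := IH v hv.1.
have [R0_above [R0_below _]] := @hR W f hf v.
have R0_sub : rsub (R0 (f v)) (f v) := R0_below (@obar_deflationary _ _ _ _).
apply: rsub_trans (GR_mono hA R0_sub) (rsub_trans _ R0_above).
by rewrite (obar_LR_agrees hB hv_closed) => i s hs; split=> //; apply: hv_closed.
Qed.

Lemma tower_bottom_sub_relaxation_stage :
  forall w, rsub (tower_bottom (obar (GR bs))) (f w).
Proof.
apply: (iteration_ind hf) => [w v hv -> IH | w -> IH i s hs u hu]; last exact: IH.
have [R0_above _] := @hR W f hf v.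
rewrite -(tower_bottom_fixed (@obar_deflationary _ _ (GR bs))).
apply: rsub_trans (obar_GR_mono hA (IH v hv.1)) _.
by rewrite -(obar_LR_agrees hB (relaxation_stage_GR_closed (w:=v))).
Qed.

Lemma relaxation_final_stage_fixed a a1 :
  wo_succ a a1 -> f a1 = f a -> obar (GR bs) (f a) = f a.
Proof.
move=> ha1 e; have [_ [_ R0_fixed]] := @hR W f hf a.
rewrite -(obar_LR_agrees hB (relaxation_stage_GR_closed (w:=a))).
by apply: R0_fixed; rewrite -((hf a1).1 a ha1).
Qed.

End Relaxations.

Lemma relaxation_outcome n (H : game n) (bs : belief_structure H)
    (hA : propertyA bs) (hB : propertyB bs) (R0 : operator H) X :
  relaxation (obar (LR bs)) R0 -> outcome R0 X -> X = tower_bottom (obar (GR bs)).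
Proof.
move=> hR [W [f [a [a1 [hf [ha1 [e [-> _]]]]]]]].
apply: restriction_ext; last exact: (tower_bottom_sub_relaxation_stage hA hB hR hf).
apply: post_fixpoint_sub_tower_bottom; first exact: obar_GR_mono.
by rewrite (relaxation_final_stage_fixed hA hB hR hf ha1 e).
Qed.

Theorem mainTheorem7 (n : nat) (H : game n) (bs : belief_structure H)
    (hA : propertyA bs) (hB : propertyB bs) :
  (* (i) *)
  ((forall (W : wellorder) (f g : W -> restriction H),
      is_iteration (obar (GR bs)) f -> is_iteration (obar (LR bs)) g ->
      forall w : W, f w = g w) /\
   (forall X : restriction H,
      outcome (obar (GR bs)) X <-> outcome (obar (LR bs)) X)) /\
  (* (ii) *)
  (order_independent (obar (LR bs)) /\
   (forall (R0 : operator H) (X : restriction H),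
      relaxation (obar (LR bs)) R0 -> outcome R0 X ->
      outcome (obar (GR bs)) X)) /\
  (* (iii) *)
  ((forall (W : wellorder) (f g : W -> restriction H),
      is_iteration (LR bs) f -> is_iteration (obar (LR bs)) g ->
      forall w : W, f w = g w) /\
   (exists X : restriction H, outcome (LR bs) X /\ outcome (obar (LR bs)) X) /\
   (forall X : restriction H,
      outcome (LR bs) X <-> outcome (obar (LR bs)) X)).
Proof.
have aGR := @obar_GR_agrees n H bs.
have aLRbar := obar_LR_agrees hB.
have aLR := LR_agrees hB.
have GR_outcome := tower_outcome (@obar_deflationary _ _ (GR bs)).
have relax := relaxation_outcome hA hB.
split; [split | split; [split | split; [|split]]].
- move=> W f g hf hg.
  exact: iteration_unique hf (iteration_transfer hA aLRbar aGR hg).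
- by move=> X; split; apply: (outcome_transfer hA).
- move=> R1 R2 X1 X2 h1 h2 o1 o2.
  by rewrite (relax _ _ h1 o1) (relax _ _ h2 o2).
- by move=> R0 X hR hX; rewrite (relax _ _ hR hX).
- move=> W f g hf hg.
  exact: iteration_unique (iteration_transfer hA aLR aGR hf)
                          (iteration_transfer hA aLRbar aGR hg).
- by exists (tower_bottom (obar (GR bs))); split; apply: (outcome_transfer hA aGR).
- by move=> X; split; apply: (outcome_transfer hA).
Qed.
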